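(* Let $(\mathcal H,\mathfrak A_0)$ be a Hilbert quasi *-algebra with unit $e$. Then the set $\mathcal H_b$ of bounded elements coincides with the set of universal multipliers of $\mathcal H$, i.e. $\mathcal H_b=\{\xi\in\mathcal H:\ \eta\square\xi \text{ is defined for every }\eta\in\mathcal H\}=\{\xi\in\mathcal H:\ \xi\square\eta\text{ is defined for every }\eta\in\mathcal H\}$.
   Context: A Hilbert algebra is a *-algebra $\mathfrak A_0$ with an inner product $\langle\cdot,\cdot\rangle$ such that (i) for each $x$, $y\mapsto xy$ is continuous for the inner product norm; (ii) $\langle xy,z\rangle=\langle y,x^*z\rangle$ for all $x,y,z$; (iii) $\langle x,y\rangle=\langle y^*,x^*\rangle$ for all $x,y$; (iv) the linear span of $\{xy:x,y\in\mathfrak A_0\}$ is dense in $\mathfrak A_0$. Let $\mathcal H$ be the Hilbert space completion of $\mathfrak A_0$; the involution extends isometrically to $\mathcal H$, and the products $\xi x$, $x\xi$ for $\xi\in\mathcal H$, $x\in\mathfrak A_0$ are defined by continuity. It is assumed that (A): if $\xi\in\mathcal H$ and $\xi x=0$ for all $x\in\mathfrak A_0$ then $\xi=0$. With these operations $(\mathcal H,\mathfrak A_0)$ is a Banach quasi *-algebra, called a Hilbert quasi *-algebra. A unit is $e\in\mathfrak A_0$ with $\xi e=e\xi=\xi$ for all $\xi\in\mathcal H$. For $\xi\in\mathcal H$, $L_\xi$, $R_\xi$ are the operators with domain $\mathfrak A_0$ given by $L_\xi x=\xi x$, $R_\xi x=x\xi$. $\xi$ is a bounded element if $L_\xi$ is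 bounded on $\mathfrak A_0$ (equivalently, $R_\xi$ is bounded). $\mathcal H_b$ is the set of bounded elements. Weak multiplication: $\xi$ is a left multiplier of $\eta$ if there is $\zeta\in\mathcal H$ with $\langle\eta x,\xi^*y\rangle=\langle\zeta x,y\rangle$ for all $x,y\in\mathfrak A_0$; then $\xi\square\eta:=\zeta$. *)

From Stdlib Require Import Reals List.
Open Scope R_scope.

Record C := mkC { Cre : R ; Cim : R }.
Definition C0 : C := mkC 0 0.
Definition C1 : C := mkC 1 0.
Definition Cadd (a b : C) : C := mkC (Cre a + Cre b) (Cim a + Cim b).
Definition Cmul (a b : C) : C :=
  mkC (Cre a * Cre b - Cim a * Cim b) (Cre a * Cim b + Cim a * Cre b).
Definition Cconj (a : C) : C := mkC (Cre a) (- Cim a).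

Definition ipnorm {H : Type} (inner : H -> H -> C) (x : H) : R :=
  sqrt (Cre (inner x x)).

(** * Hilbert quasi *-algebras (H, A0)
   H is a complex Hilbert space (inner product linear in the first variable,
   conjugate-linear in the second), A0 (a predicate on H) is a dense subspace
   which is a Hilbert algebra.  [mul] is the multiplication: on A0 x A0 it is the
   product of A0; for xi in H and x in A0, [mul xi x] and [mul x xi] are the
   products extended by continuity (values of [mul] on H x H outside this range
   are irrelevant).  [star] is the involution of A0 extended isometrically to H. *)
Record HQA := {
  H :> Type;
  hadd : H -> H -> H;
  hopp : H -> H;
  hzero : H;
  hscal : C -> H -> H;
  inner : H -> H -> C;
  star : H -> H;
  mul : H -> H -> H;
  A0 : H -> Prop;

  haddA : forall x y z, hadd x (hadd y z) = hadd (hadd x y) z;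
  haddC : forall x y, hadd x y = hadd y x;
  hadd0 : forall x, hadd x hzero = x;
  haddN : forall x, hadd x (hopp x) = hzero;
  hscal1 : forall x, hscal C1 x = x;
  hscalA : forall a b x, hscal a (hscal b x) = hscal (Cmul a b) x;
  hscalDl : forall a b x, hscal (Cadd a b) x = hadd (hscal a x) (hscal b x);
  hscalDr : forall a x y, hscal a (hadd x y) = hadd (hscal a x) (hscal a y);

  inner_addl : forall x y z, inner (hadd x y) z = Cadd (inner x z) (inner y z);
  inner_scall : forall a x y, inner (hscal a x) y = Cmul a (inner x y);
  inner_conj : forall x y, inner y x = Cconj (inner x y);
  inner_pos : forall x, 0 <= Cre (inner x x);
  inner_def : forall x, inner x x = C0 -> x = hzero;

  complete : forall u : nat -> H,
    (forall eps, 0 < eps -> exists N, forall m n, (N <= m)%nat -> (N <= n)%nat ->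
        ipnorm inner (hadd (u m) (hopp (u n))) < eps) ->
    exists l, forall eps, 0 < eps -> exists N, forall n, (N <= n)%nat ->
        ipnorm inner (hadd (u n) (hopp l)) < eps;

  A0_zero : A0 hzero;
  A0_add : forall x y, A0 x -> A0 y -> A0 (hadd x y);
  A0_scal : forall a x, A0 x -> A0 (hscal a x);
  A0_dense : forall xi eps, 0 < eps ->
    exists x, A0 x /\ ipnorm inner (hadd xi (hopp x)) < eps;

  A0_mul : forall x y, A0 x -> A0 y -> A0 (mul x y);
  A0_star : forall x, A0 x -> A0 (star x);
  mulA : forall x y z, A0 x -> A0 y -> A0 z -> mul x (mul y z) = mul (mul x y) z;
  mul_addl_A0 : forall x y z, A0 x -> A0 y -> A0 z ->
    mul (hadd x y) z = hadd (mul x z) (mul y z);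
  mul_addr_A0 : forall x y z, A0 x -> A0 y -> A0 z ->
    mul x (hadd y z) = hadd (mul x y) (mul x z);
  mul_scall_A0 : forall a x y, A0 x -> A0 y -> mul (hscal a x) y = hscal a (mul x y);
  mul_scalr_A0 : forall a x y, A0 x -> A0 y -> mul x (hscal a y) = hscal a (mul x y);
  star_mul_A0 : forall x y, A0 x -> A0 y -> star (mul x y) = mul (star y) (star x);

  star_add : forall x y, star (hadd x y) = hadd (star x) (star y);
  star_scal : forall a x, star (hscal a x) = hscal (Cconj a) (star x);
  star_star : forall x, star (star x) = x;
  star_iso : forall x, ipnorm inner (star x) = ipnorm inner x;

  ha_cont : forall x, A0 x -> exists K, forall y, A0 y ->
    ipnorm inner (mul x y) <= K * ipnorm inner y;
  ha_adj : forall x y z, A0 x -> A0 y -> A0 z ->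
    inner (mul x y) z = inner y (mul (star x) z);
  ha_star : forall x y, A0 x -> A0 y -> inner x y = inner (star y) (star x);
  ha_span : forall x eps, A0 x -> 0 < eps ->
    exists l : list (H * H),
      (forall p, In p l -> A0 (fst p) /\ A0 (snd p)) /\
      ipnorm inner (hadd x (hopp (fold_right (fun p s => hadd (mul (fst p) (snd p)) s)
                                                hzero l))) < eps;

  mul_ext_bound : forall x, A0 x -> exists K, forall xi,
    ipnorm inner (mul xi x) <= K * ipnorm inner xi /\
    ipnorm inner (mul x xi) <= K * ipnorm inner xi;
  mul_ext_addl : forall x xi eta, A0 x -> mul (hadd xi eta) x = hadd (mul xi x) (mul eta x);
  mul_ext_addr : forall x xi eta, A0 x -> mul x (hadd xi eta) = hadd (mul x xi) (mul x eta);
  mul_ext_scall : forall a x xi, A0 x -> mul (hscal a xi) x = hscal a (mul xi x);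
  mul_ext_scalr : forall a x xi, A0 x -> mul x (hscal a xi) = hscal a (mul x xi);

  cond_A : forall xi, (forall x, A0 x -> mul xi x = hzero) -> xi = hzero
}.

Arguments hadd {_}. Arguments hopp {_}. Arguments hzero {_}. Arguments hscal {_}.
Arguments inner {_}. Arguments star {_}. Arguments mul {_}. Arguments A0 {_}.

Definition hnorm {A : HQA} (x : A) : R := ipnorm inner x.

Definition is_unit (A : HQA) (e : A) : Prop :=
  A0 e /\ forall xi : A, mul xi e = xi /\ mul e xi = xi.

Definition bounded_elt (A : HQA) (xi : A) : Prop :=
  exists K, forall x : A, A0 x -> hnorm (mul xi x) <= K * hnorm x.

(** Weak multiplication: xi is a left multiplier of eta (xi [] eta defined). *)
Definition left_mult (A : HQA) (xi eta : A) : Prop :=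
  exists zeta : A, forall x y : A, A0 x -> A0 y ->
    inner (mul eta x) (mul (star xi) y) = inner (mul zeta x) y.

(* If xi is bounded, so is a |-> a xi on A0 (via the involution); it extends by continuity to
   H, and its value at eta is eta [] xi, because the defining identity is continuous in eta and
   holds on the dense A0.  Conversely, testing the defining identity of eta [] xi at the unit
   gives <eta, y xi*> = <eta [] xi, y> for y in A0, so every eta yields a functional bounded on
   the family y xi* (|y| <= 1).  By uniform boundedness (a gliding-hump argument) right
   multiplication by xi* is bounded, hence so is xi.  The case xi [] eta is symmetric, with
   left multiplication by xi*. *)

From Stdlib Require Import Reals List Lra Lia Psatz Classical ClassicalEpsilon.
Open Scope R_scope.

Lemma Cext (a b : C) : Cre a = Cre b -> Cim a = Cim b -> a = b.
Proof. destruct a, b; simpl; intros; subst; reflexivity. Qed.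

Ltac Csolve := apply Cext; unfold Cadd, Cmul, Cconj, C0, C1; simpl; ring.

Notation "x -h y" := (hadd x (hopp y)) (at level 50, left associativity).

Lemma eps_le (a b : R) : (forall eps, 0 < eps -> a <= b + eps) -> a <= b.
Proof.
  intro H. destruct (Rle_dec a b) as [|n]; auto.
  specialize (H ((a - b) / 2)). lra.
Qed.

Lemma discriminant_le (a r c : R) :
  0 < c -> (forall t, 0 <= a + 2 * t * r + t * t * c) -> r * r <= a * c.
Proof.
  intros Hc H. specialize (H (- r / c)).
  replace (a + 2 * (- r / c) * r + - r / c * (- r / c) * c) with (a - r * r / c) in H
    by (field; lra).
  assert (E : r * r / c * c = r * r) by (field; lra).
  assert (r * r / c * c <= a * c) by (apply Rmult_le_compat_r; lra).
  lra.
Qed.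

Lemma mul_div_succ_lt (K e : R) : 0 <= K -> 0 < e -> K * (e / (K + 1)) < e.
Proof.
  intros HK He. assert (E : (K + 1) * (e / (K + 1)) = e) by (field; lra).
  assert (0 < e / (K + 1)) by (apply Rdiv_lt_0_compat; lra).
  nra.
Qed.

Lemma inv_INR_small (eps : R) : 0 < eps -> exists N, forall n, (N <= n)%nat -> / INR (S n) < eps.
Proof.
  intro He. destruct (archimed_cor1 eps He) as [N [HN HN0]]. exists N. intros n Hn.
  eapply Rle_lt_trans; [| exact HN].
  apply Rinv_le_contravar; [apply lt_0_INR; exact HN0 | apply le_INR; lia].
Qed.

Section VectorSpace.
Context {A : HQA}.
Implicit Types x y z u w : A.

Lemma hadd0l x : hadd hzero x = x.
Proof. rewrite haddC; apply hadd0. Qed.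

Lemma hadd_cancel z x y : hadd z x = hadd z y -> x = y.
Proof.
  intro H. assert (E : hadd (hopp z) (hadd z x) = hadd (hopp z) (hadd z y)) by now rewrite H.
  rewrite !haddA, (haddC _ (hopp z) z), haddN, !hadd0l in E. exact E.
Qed.

Lemma hscal0 x : hscal C0 x = hzero.
Proof. apply (hadd_cancel (hscal C0 x)). rewrite hadd0, <- hscalDl. f_equal. Csolve. Qed.

Lemma hopp_scal x : hopp x = hscal (mkC (-1) 0) x.
Proof.
  apply (hadd_cancel x). rewrite haddN. rewrite <- (hscal1 _ x) at 1.
  rewrite <- hscalDl, <- (hscal0 x). f_equal. Csolve.
Qed.

Lemma hopp_add x y : hopp (hadd x y) = hadd (hopp x) (hopp y).
Proof. rewrite !hopp_scal, hscalDr. reflexivity. Qed.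

Lemma hopp_hopp x : hopp (hopp x) = x.
Proof. rewrite !hopp_scal, hscalA. rewrite <- (hscal1 _ x) at 2. f_equal. Csolve. Qed.

Lemma hadd_shuffle x y z u : hadd (hadd x y) (hadd z u) = hadd (hadd x z) (hadd y u).
Proof. rewrite <- !haddA. f_equal. rewrite !haddA. f_equal. apply haddC. Qed.

Lemma hsub_self x : x -h x = hzero.
Proof. apply haddN. Qed.

Lemma hsub_split x y z : x -h y = hadd (x -h z) (z -h y).
Proof. rewrite (haddC _ z), hadd_shuffle, (haddC _ (hopp z)), haddN, hadd0. reflexivity. Qed.

Lemma hsub_sub x y z u : (x -h y) -h (z -h u) = (x -h z) -h (y -h u).
Proof. rewrite !hopp_add, hadd_shuffle. reflexivity. Qed.

Lemma hsub_eq x y : x -h y = hzero -> x = y.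
Proof.
  intro H. assert (E : hadd (x -h y) y = hadd hzero y) by now rewrite H.
  rewrite <- haddA, (haddC _ (hopp y) y), haddN, hadd0, hadd0l in E. exact E.
Qed.

Lemma hsub_swap x y : y -h x = hopp (x -h y).
Proof. rewrite hopp_add, hopp_hopp, haddC. reflexivity. Qed.

Lemma hadd_subl x y : hadd x y -h x = y.
Proof. rewrite (haddC _ x y), <- haddA, haddN, hadd0. reflexivity. Qed.

Lemma hadd_subK x y : hadd y (x -h y) = x.
Proof. rewrite haddA, (haddC _ y x), <- haddA, haddN, hadd0. reflexivity. Qed.

Lemma A0_opp x : A0 x -> A0 (hopp x).
Proof. intro Hx. rewrite hopp_scal. apply A0_scal, Hx. Qed.

Lemma A0_sub x y : A0 x -> A0 y -> A0 (x -h y).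
Proof. intros Hx Hy. apply A0_add, A0_opp; assumption. Qed.

Lemma star_sub x y : star (x -h y) = star x -h star y.
Proof. rewrite star_add, !hopp_scal, star_scal. do 2 f_equal. Csolve. Qed.

End VectorSpace.

Section InnerProduct.
Context {A : HQA}.
Implicit Types x y z u w : A.

Lemma inner_addr x y z : inner x (hadd y z) = Cadd (inner x y) (inner x z).
Proof. rewrite (inner_conj _ (hadd y z)), inner_addl, (inner_conj _ y), (inner_conj _ z). Csolve. Qed.

Lemma inner_scalr (a : C) x y : inner x (hscal a y) = Cmul (Cconj a) (inner x y).
Proof. rewrite (inner_conj _ (hscal a y)), inner_scall, (inner_conj _ y). Csolve. Qed.

Lemma inner_zerol y : inner hzero y = C0.
Proof. rewrite <- (hscal0 y), inner_scall. Csolve. Qed.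

Lemma Re_inner_sym x y : Cre (inner x y) = Cre (inner y x).
Proof. rewrite (inner_conj _ x y). reflexivity. Qed.

Lemma Re_inner_subl x y z : Cre (inner (x -h y) z) = Cre (inner x z) - Cre (inner y z).
Proof. rewrite inner_addl, hopp_scal, inner_scall. simpl. ring. Qed.

Lemma Im_inner_subl x y z : Cim (inner (x -h y) z) = Cim (inner x z) - Cim (inner y z).
Proof. rewrite inner_addl, hopp_scal, inner_scall. simpl. ring. Qed.

Lemma Re_inner_scall (t : R) x y : Cre (inner (hscal (mkC t 0) x) y) = t * Cre (inner x y).
Proof. rewrite inner_scall. simpl. ring. Qed.

Lemma Re_inner_scalr (t : R) x y : Cre (inner y (hscal (mkC t 0) x)) = t * Cre (inner y x).
Proof. rewrite inner_scalr. simpl. ring. Qed.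

Lemma Im_inner_as_Re x y : Cim (inner x y) = Cre (inner x (hscal (mkC 0 1) y)).
Proof. rewrite inner_scalr. simpl. ring. Qed.

Lemma Re_inner_add_self x y :
  Cre (inner (hadd x y) (hadd x y)) = Cre (inner x x) + 2 * Cre (inner x y) + Cre (inner y y).
Proof. rewrite !inner_addl, !inner_addr, (inner_conj _ y x). simpl. ring. Qed.

Lemma hnorm_ge0 x : 0 <= hnorm x.
Proof. apply sqrt_pos. Qed.

Lemma hnorm_sq x : hnorm x * hnorm x = Cre (inner x x).
Proof. apply sqrt_sqrt, inner_pos. Qed.

Lemma hnorm_eq0 x : hnorm x = 0 -> x = hzero.
Proof.
  intro H. apply inner_def, Cext; simpl.
  - rewrite <- hnorm_sq, H. ring.
  - pose proof (f_equal Cim (inner_conj _ x x)) as E. simpl in E. lra.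
Qed.

Lemma hnorm0 : hnorm (@hzero A) = 0.
Proof. unfold hnorm, ipnorm. rewrite inner_zerol. apply sqrt_0. Qed.

Lemma hnorm_scal (t : R) x : hnorm (hscal (mkC t 0) x) = Rabs t * hnorm x.
Proof.
  assert (Hx := hnorm_ge0 x). assert (Ht := Rabs_pos t).
  assert (Hsq : Rabs t * Rabs t = t * t) by (rewrite <- Rabs_mult; apply Rabs_right; nra).
  apply Rsqr_inj; [apply hnorm_ge0 | apply Rmult_le_pos; assumption |]. unfold Rsqr.
  rewrite hnorm_sq, Re_inner_scall, Re_inner_scalr.
  replace (Rabs t * hnorm x * (Rabs t * hnorm x)) with (Rabs t * Rabs t * (hnorm x * hnorm x))
    by ring.
  rewrite Hsq, hnorm_sq. ring.
Qed.

Lemma hnorm_opp x : hnorm (hopp x) = hnorm x.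
Proof. rewrite hopp_scal, hnorm_scal, Rabs_left by lra. ring. Qed.

Lemma hnorm_sub_sym x y : hnorm (x -h y) = hnorm (y -h x).
Proof. rewrite (hsub_swap x y), hnorm_opp. reflexivity. Qed.

Lemma hnorm_star x : hnorm (star x) = hnorm x.
Proof. apply star_iso. Qed.

Lemma hnorm_scal_i x : hnorm (hscal (mkC 0 1) x) = hnorm x.
Proof. unfold hnorm, ipnorm. rewrite inner_scall, inner_scalr. simpl. f_equal. ring. Qed.

Lemma cauchy_schwarz_Re x y : Rabs (Cre (inner x y)) <= hnorm x * hnorm y.
Proof.
  destruct (Req_dec (hnorm y) 0) as [Hy | Hy].
  { rewrite (hnorm_eq0 y Hy), hnorm0, Re_inner_sym, inner_zerol. simpl.
    rewrite Rabs_R0. lra. }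
  assert (Hx := hnorm_ge0 x). assert (Hy0 := hnorm_ge0 y).
  assert (D : Cre (inner x y) * Cre (inner x y) <= (hnorm x * hnorm x) * (hnorm y * hnorm y)).
  { apply discriminant_le; [nra |]. intro t.
    pose proof (inner_pos _ (hadd x (hscal (mkC t 0) y))) as P.
    rewrite Re_inner_add_self, Re_inner_scalr, Re_inner_scall, Re_inner_scalr,
      <- !hnorm_sq in P.
    lra. }
  rewrite <- (Rabs_right (hnorm x * hnorm y)) by nra.
  apply Rsqr_le_abs_0. unfold Rsqr. nra.
Qed.

Lemma cauchy_schwarz_Im x y : Rabs (Cim (inner x y)) <= hnorm x * hnorm y.
Proof. rewrite Im_inner_as_Re, <- (hnorm_scal_i y). apply cauchy_schwarz_Re. Qed.

Lemma hnorm_triangle x y : hnorm (hadd x y) <= hnorm x + hnorm y.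
Proof.
  assert (Hx := hnorm_ge0 x). assert (Hy := hnorm_ge0 y).
  assert (Hxy := hnorm_ge0 (hadd x y)).
  assert (C := cauchy_schwarz_Re x y). assert (Cr := Rle_abs (Cre (inner x y))).
  assert (E : hnorm (hadd x y) * hnorm (hadd x y) <= (hnorm x + hnorm y) * (hnorm x + hnorm y)).
  { rewrite hnorm_sq, Re_inner_add_self, <- !hnorm_sq. nra. }
  nra.
Qed.

Lemma hnorm_sub_triangle x y z : hnorm (x -h y) <= hnorm (x -h z) + hnorm (z -h y).
Proof. rewrite (hsub_split x y z). apply hnorm_triangle. Qed.

Lemma Rabs_hnorm_sub_le x y : Rabs (hnorm x - hnorm y) <= hnorm (x -h y).
Proof.
  pose proof (hnorm_triangle y (x -h y)) as Tx. pose proof (hnorm_triangle x (y -h x)) as Ty.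
  rewrite hadd_subK in Tx, Ty. rewrite (hnorm_sub_sym y x) in Ty.
  apply Rabs_le. lra.
Qed.

Lemma Re_inner_sub_le x y z :
  Rabs (Cre (inner x z) - Cre (inner y z)) <= hnorm (x -h y) * hnorm z.
Proof. rewrite <- Re_inner_subl. apply cauchy_schwarz_Re. Qed.

Lemma Im_inner_sub_le x y z :
  Rabs (Cim (inner x z) - Cim (inner y z)) <= hnorm (x -h y) * hnorm z.
Proof. rewrite <- Im_inner_subl. apply cauchy_schwarz_Im. Qed.

End InnerProduct.

Section Density.
Context {A : HQA}.
Implicit Types x y z u w xi : A.

Definition Lip (f : A -> A) : Prop :=
  exists K, 0 <= K /\ forall u w, hnorm (f u -h f w) <= K * hnorm (u -h w).

Definition RLip (F : A -> R) : Prop :=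
  exists K, 0 <= K /\ forall u w, Rabs (F u - F w) <= K * hnorm (u -h w).

Definition CLip (F : A -> C) : Prop :=
  RLip (fun u => Cre (F u)) /\ RLip (fun u => Cim (F u)).

Lemma A0_approx xi (K eps : R) :
  0 <= K -> 0 < eps -> exists x, A0 x /\ K * hnorm (xi -h x) <= eps.
Proof.
  intros HK He. destruct (A0_dense _ xi (eps / (K + 1))) as [x [Hx Hd]].
  { apply Rdiv_lt_0_compat; lra. }
  change (hnorm (xi -h x) < eps / (K + 1)) in Hd.
  exists x. split; [exact Hx |].
  assert (Hs := mul_div_succ_lt K eps HK He).
  assert (K * hnorm (xi -h x) <= K * (eps / (K + 1))) by (apply Rmult_le_compat_l; lra).
  lra.
Qed.

Lemma RLip_dense_ext (F G : A -> R) :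
  RLip F -> RLip G -> (forall x, A0 x -> F x = G x) -> forall xi, F xi = G xi.
Proof.
  intros [K1 [HK1 L1]] [K2 [HK2 L2]] E xi.
  enough (H : Rabs (F xi - G xi) <= 0)
    by (pose proof (Rle_abs (F xi - G xi)); pose proof (Rle_abs (- (F xi - G xi)));
        rewrite Rabs_Ropp in *; lra).
  apply eps_le. intros eps Heps.
  destruct (A0_approx xi (K1 + K2) eps) as [x [Hx Hd]]; [lra | exact Heps |].
  specialize (L1 xi x). specialize (L2 x xi). rewrite hnorm_sub_sym in L2.
  replace (F xi - G xi) with ((F xi - F x) + (G x - G xi)) by (rewrite (E x Hx); ring).
  eapply Rle_trans; [apply Rabs_triang | lra].
Qed.

Lemma RLip_hnorm_sub (f g : A -> A) : Lip f -> Lip g -> RLip (fun u => hnorm (f u -h g u)).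
Proof.
  intros [K1 [HK1 L1]] [K2 [HK2 L2]]. exists (K1 + K2). split; [lra |]. intros u w.
  eapply Rle_trans; [apply Rabs_hnorm_sub_le |].
  rewrite hsub_sub. eapply Rle_trans; [apply hnorm_triangle |].
  rewrite hnorm_opp. specialize (L1 u w). specialize (L2 u w). lra.
Qed.

Lemma Lip_dense_ext (f g : A -> A) :
  Lip f -> Lip g -> (forall x, A0 x -> f x = g x) -> forall xi, f xi = g xi.
Proof.
  intros Lf Lg E xi. apply hsub_eq, hnorm_eq0.
  apply (RLip_dense_ext (fun u => hnorm (f u -h g u)) (fun _ => 0)).
  - apply RLip_hnorm_sub; assumption.
  - exists 0. split; [lra |]. intros u w. rewrite Rminus_0_r, Rabs_R0. lra.
  - intros x Hx. rewrite (E x Hx), hsub_self. apply hnorm0.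
Qed.

Lemma CLip_dense_ext (F G : A -> C) :
  CLip F -> CLip G -> (forall x, A0 x -> F x = G x) -> forall xi, F xi = G xi.
Proof.
  intros [F1 F2] [G1 G2] E xi. apply Cext.
  - apply (RLip_dense_ext (fun u => Cre (F u)) (fun u => Cre (G u))); auto.
    intros x Hx. rewrite (E x Hx). reflexivity.
  - apply (RLip_dense_ext (fun u => Cim (F u)) (fun u => Cim (G u))); auto.
    intros x Hx. rewrite (E x Hx). reflexivity.
Qed.

Lemma Lip_id : Lip (fun u => u).
Proof. exists 1. split; [lra |]. intros u w. lra. Qed.

Lemma Lip_comp (f g : A -> A) : Lip f -> Lip g -> Lip (fun u => f (g u)).
Proof.
  intros [K1 [HK1 L1]] [K2 [HK2 L2]]. exists (K1 * K2). split; [nra |]. intros u w.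
  eapply Rle_trans; [apply L1 |]. rewrite Rmult_assoc. apply Rmult_le_compat_l; auto.
Qed.

Lemma Lip_sub (f g : A -> A) : Lip f -> Lip g -> Lip (fun u => f u -h g u).
Proof.
  intros [K1 [HK1 L1]] [K2 [HK2 L2]]. exists (K1 + K2). split; [lra |]. intros u w.
  rewrite hsub_sub. eapply Rle_trans; [apply hnorm_triangle |].
  rewrite hnorm_opp. specialize (L1 u w). specialize (L2 u w). lra.
Qed.

Lemma Lip_star : Lip (fun u => star u).
Proof. exists 1. split; [lra |]. intros u w. rewrite <- star_sub, hnorm_star. lra. Qed.

Lemma mul_ext_subl a u w : A0 a -> mul (u -h w) a = mul u a -h mul w a.
Proof. intro Ha. rewrite mul_ext_addl, !hopp_scal, mul_ext_scall; auto. Qed.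

Lemma mul_ext_subr a u w : A0 a -> mul a (u -h w) = mul a u -h mul a w.
Proof. intro Ha. rewrite mul_ext_addr, !hopp_scal, mul_ext_scalr; auto. Qed.

Lemma Lip_mulr a : A0 a -> Lip (fun u => mul u a).
Proof.
  intro Ha. destruct (mul_ext_bound _ a Ha) as [K HK].
  exists (Rmax K 0). split; [apply Rmax_r |]. intros u w.
  rewrite <- mul_ext_subl by exact Ha. eapply Rle_trans; [apply (HK (u -h w)) |].
  apply Rmult_le_compat_r; [apply hnorm_ge0 | apply Rmax_l].
Qed.

Lemma Lip_mull a : A0 a -> Lip (fun u => mul a u).
Proof.
  intro Ha. destruct (mul_ext_bound _ a Ha) as [K HK].
  exists (Rmax K 0). split; [apply Rmax_r |]. intros u w.
  rewrite <- mul_ext_subr by exact Ha. eapply Rle_trans; [apply (HK (u -h w)) |].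
  apply Rmult_le_compat_r; [apply hnorm_ge0 | apply Rmax_l].
Qed.

Lemma CLip_inner_l (f : A -> A) c : Lip f -> CLip (fun u => inner (f u) c).
Proof.
  intros [K [HK L]].
  split; exists (K * hnorm c); (split; [apply Rmult_le_pos; [exact HK | apply hnorm_ge0] |]);
    intros u w; specialize (L u w); pose proof (hnorm_ge0 c).
  - eapply Rle_trans; [apply Re_inner_sub_le | nra].
  - eapply Rle_trans; [apply Im_inner_sub_le | nra].
Qed.

Lemma CLip_inner_r (f : A -> A) c : Lip f -> CLip (fun u => inner c (f u)).
Proof.
  intro Lf. destruct (CLip_inner_l f c Lf) as [[K1 [HK1 L1]] [K2 [HK2 L2]]].
  split; [exists K1 | exists K2]; split; auto; intros u w; rewrite (inner_conj _ (f u)), (inner_conj _ (f w)); simpl.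
  - apply L1.
  - rewrite <- Rabs_Ropp. replace (- (- Cim (inner (f u) c) - - Cim (inner (f w) c)))
      with (Cim (inner (f u) c) - Cim (inner (f w) c)) by ring.
    apply L2.
Qed.

End Density.

(* In the names below, [H] marks the factor that ranges over all of [H] rather than [A0],
   and [l], [m], [r] its position (left, middle, right). *)
Section ExtendedProduct.
Context {A : HQA}.
Implicit Types x y z u w xi eta a b : A.

Lemma mul_Hl_subr xi a b : A0 a -> A0 b -> mul xi (a -h b) = mul xi a -h mul xi b.
Proof.
  intros Ha Hb. revert xi.
  apply (Lip_dense_ext (fun u => mul u (a -h b)) (fun u => mul u a -h mul u b)).
  - apply Lip_mulr, A0_sub; assumption.
  - apply Lip_sub; apply Lip_mulr; assumption.
  - intros x Hx. rewrite mul_addr_A0, !hopp_scal, mul_scalr_A0 by auto using A0_opp.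
    reflexivity.
Qed.

Lemma mul_Hr_subl xi a b : A0 a -> A0 b -> mul (a -h b) xi = mul a xi -h mul b xi.
Proof.
  intros Ha Hb. revert xi.
  apply (Lip_dense_ext (fun u => mul (a -h b) u) (fun u => mul a u -h mul b u)).
  - apply Lip_mull, A0_sub; assumption.
  - apply Lip_sub; apply Lip_mull; assumption.
  - intros x Hx. rewrite mul_addl_A0, !hopp_scal, mul_scall_A0 by auto using A0_opp.
    reflexivity.
Qed.

Lemma mul_Hl_zero xi : mul xi hzero = hzero.
Proof.
  pose proof (mul_Hl_subr xi hzero hzero (A0_zero A) (A0_zero A)) as E.
  rewrite !hsub_self in E. exact E.
Qed.

Lemma mul_Hr_zero xi : mul hzero xi = hzero.
Proof.
  pose proof (mul_Hr_subl xi hzero hzero (A0_zero A) (A0_zero A)) as E.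
  rewrite !hsub_self in E. exact E.
Qed.

Lemma mul_Hl_assoc xi a x : A0 a -> A0 x -> mul (mul xi a) x = mul xi (mul a x).
Proof.
  intros Ha Hx. revert xi.
  apply (Lip_dense_ext (fun u => mul (mul u a) x) (fun u => mul u (mul a x))).
  - apply (Lip_comp (fun u => mul u x)); apply Lip_mulr; assumption.
  - apply Lip_mulr, A0_mul; assumption.
  - intros y Hy. symmetry. apply mulA; assumption.
Qed.

Lemma mul_Hm_assoc a xi x : A0 a -> A0 x -> mul (mul a xi) x = mul a (mul xi x).
Proof.
  intros Ha Hx. revert xi.
  apply (Lip_dense_ext (fun u => mul (mul a u) x) (fun u => mul a (mul u x))).
  - apply (Lip_comp (fun u => mul u x)); [apply Lip_mulr | apply Lip_mull]; assumption.
  - apply (Lip_comp (fun u => mul a u)); [apply Lip_mull | apply Lip_mulr]; assumption.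
  - intros y Hy. symmetry. apply mulA; assumption.
Qed.

Lemma ha_adj_Hl xi x y : A0 x -> A0 y -> inner (mul xi x) y = inner x (mul (star xi) y).
Proof.
  intros Hx Hy. revert xi.
  apply (CLip_dense_ext (fun u => inner (mul u x) y) (fun u => inner x (mul (star u) y))).
  - apply CLip_inner_l, Lip_mulr; assumption.
  - apply CLip_inner_r, (Lip_comp (fun u => mul u y)); [apply Lip_mulr; assumption | apply Lip_star].
  - intros z Hz. apply ha_adj; assumption.
Qed.

Lemma ha_adj_Hm a z y : A0 a -> A0 y -> inner (mul a z) y = inner z (mul (star a) y).
Proof.
  intros Ha Hy. revert z.
  apply (CLip_dense_ext (fun u => inner (mul a u) y) (fun u => inner u (mul (star a) y))).
  - apply CLip_inner_l, Lip_mull; assumption.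
  - apply CLip_inner_l, Lip_id.
  - intros z Hz. apply ha_adj; assumption.
Qed.

Lemma star_mul_Hr a xi : A0 a -> star (mul a xi) = mul (star xi) (star a).
Proof.
  intros Ha. revert xi.
  apply (Lip_dense_ext (fun u => star (mul a u)) (fun u => mul (star u) (star a))).
  - apply (Lip_comp (fun u => star u)); [apply Lip_star | apply Lip_mull; assumption].
  - apply (Lip_comp (fun u => mul u (star a))); [apply Lip_mulr, A0_star; assumption | apply Lip_star].
  - intros x Hx. apply star_mul_A0; assumption.
Qed.

Lemma ha_adj_right a b y : A0 a -> A0 b -> A0 y -> inner (mul a b) y = inner a (mul y (star b)).
Proof.
  intros Ha Hb Hy.
  rewrite (ha_star _ (mul a b) y), star_mul_A0, (inner_conj _ (mul (star b) (star a))),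
    ha_adj, star_star by auto using A0_mul, A0_star.
  rewrite (ha_star _ a (mul y (star b))), star_mul_A0, star_star, (inner_conj _ (star a))
    by auto using A0_mul, A0_star.
  reflexivity.
Qed.

Lemma inner_star_mul_swap xi eta y :
  A0 y -> inner xi (mul (star eta) y) = inner eta (mul y (star xi)).
Proof.
  intros Hy.
  assert (HA0 : forall b, A0 b -> forall xi, inner xi (mul (star b) y) = inner b (mul y (star xi))).
  { intros b Hb.
    apply (CLip_dense_ext (fun u => inner u (mul (star b) y)) (fun u => inner b (mul y (star u)))).
    - apply CLip_inner_l, Lip_id.
    - apply CLip_inner_r, (Lip_comp (fun u => mul y u)); [apply Lip_mull; assumption | apply Lip_star].
    - intros x Hx. rewrite <- ha_adj by assumption. apply ha_adj_right; assumption. }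
  revert eta.
  apply (CLip_dense_ext (fun u => inner xi (mul (star u) y)) (fun u => inner u (mul y (star xi)))).
  - apply CLip_inner_r, (Lip_comp (fun u => mul u y)); [apply Lip_mulr; assumption | apply Lip_star].
  - apply CLip_inner_l, Lip_id.
  - intros b Hb. apply HA0; assumption.
Qed.

End ExtendedProduct.

Section BoundedElements.
Context {A : HQA}.
Implicit Types x y a v xi : A.

Definition bounded_on_A0 (f : A -> A) : Prop :=
  exists K, 0 <= K /\ forall x, A0 x -> hnorm (f x) <= K * hnorm x.

Lemma bounded_eltP xi : bounded_elt A xi <-> bounded_on_A0 (fun x => mul xi x).
Proof.
  split.
  - intros [K HK]. exists (Rmax K 0). split; [apply Rmax_r |]. intros x Hx.
    eapply Rle_trans; [apply HK, Hx |].
    apply Rmult_le_compat_r; [apply hnorm_ge0 | apply Rmax_l].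
  - intros [K [_ HK]]. exists K. exact HK.
Qed.

Lemma hnorm_le_dual v (M : R) :
  0 <= M -> (forall x, A0 x -> Cre (inner v x) <= M * hnorm x) -> hnorm v <= M.
Proof.
  intros HM H. assert (Hv := hnorm_ge0 v).
  enough (Q : hnorm v * hnorm v <= M * hnorm v) by nra.
  apply eps_le. intros eps Heps.
  destruct (A0_approx v (M + hnorm v) eps) as [x [Hx Hd]]; [lra | exact Heps |].
  assert (Hsplit : hnorm v * hnorm v = Cre (inner v x) + Cre (inner v (v -h x))).
  { rewrite hnorm_sq, (Re_inner_sym v (v -h x)), Re_inner_subl, (Re_inner_sym x v). ring. }
  pose proof (H x Hx) as Hvx.
  pose proof (cauchy_schwarz_Re v (v -h x)) as CS. pose proof (Rle_abs (Cre (inner v (v -h x)))).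
  pose proof (Rabs_hnorm_sub_le x v) as Hxv. rewrite hnorm_sub_sym in Hxv.
  pose proof (Rle_abs (hnorm x - hnorm v)). pose proof (hnorm_ge0 (v -h x)).
  assert (M * hnorm x <= M * (hnorm v + hnorm (v -h x))) by (apply Rmult_le_compat_l; lra).
  nra.
Qed.

Lemma bounded_star xi : bounded_elt A xi -> bounded_elt A (star xi).
Proof.
  intro Hb. destruct (proj1 (bounded_eltP xi) Hb) as [K [HK HKb]].
  exists K. intros y Hy. apply hnorm_le_dual.
  { apply Rmult_le_pos; [exact HK | apply hnorm_ge0]. }
  intros x Hx. rewrite Re_inner_sym, <- ha_adj_Hl by assumption.
  eapply Rle_trans; [apply Rle_abs |]. eapply Rle_trans; [apply cauchy_schwarz_Re |].
  pose proof (HKb x Hx). pose proof (hnorm_ge0 y). pose proof (hnorm_ge0 (mul xi x)). nra.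
Qed.

Lemma bounded_mulr xi : bounded_elt A xi -> bounded_on_A0 (fun a => mul a xi).
Proof.
  intro Hb. destruct (proj1 (bounded_eltP _) (bounded_star xi Hb)) as [K [HK HKb]].
  exists K. split; [exact HK |]. intros a Ha.
  rewrite <- hnorm_star, star_mul_Hr, <- (hnorm_star a) by exact Ha.
  apply HKb, A0_star, Ha.
Qed.

Lemma bounded_of_mulr_star xi : bounded_on_A0 (fun a => mul a (star xi)) -> bounded_elt A xi.
Proof.
  intros [K [_ HK]]. exists K. intros x Hx.
  rewrite <- (star_star _ xi), <- (star_star _ x) at 1.
  rewrite <- star_mul_Hr, hnorm_star, <- (hnorm_star x) by apply A0_star, Hx.
  apply HK, A0_star, Hx.
Qed.

End BoundedElements.

Section LipschitzExtension.
Context {A : HQA}.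
Variable g : A -> A.
Variable K : R.
Hypothesis HK : 0 <= K.
Hypothesis g_lip : forall a b, A0 a -> A0 b -> hnorm (g a -h g b) <= K * hnorm (a -h b).

Definition lim_A0 (xi l : A) : Prop :=
  forall eps, 0 < eps -> exists delta, 0 < delta /\
    forall a, A0 a -> hnorm (xi -h a) < delta -> hnorm (g a -h l) < eps.

Lemma g_near (xi a b : A) :
  A0 a -> A0 b -> hnorm (g a -h g b) <= K * (hnorm (xi -h a) + hnorm (xi -h b)).
Proof.
  intros Ha Hb. eapply Rle_trans; [apply g_lip; assumption |]. apply Rmult_le_compat_l; [exact HK |].
  rewrite (hnorm_sub_sym xi a). apply hnorm_sub_triangle.
Qed.

Lemma lim_A0_exists (xi : A) : exists l, lim_A0 xi l.
Proof.
  destruct (choice (fun (n : nat) a => A0 a /\ hnorm (xi -h a) < / INR (S n))) as [s Hs].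
  { intro n. apply A0_dense, Rinv_0_lt_compat, lt_0_INR. lia. }
  assert (Hsmall : forall eps, 0 < eps -> exists N, forall n, (N <= n)%nat ->
            hnorm (xi -h s n) < eps / 4 / (K + 1)).
  { intros eps Heps. destruct (inv_INR_small (eps / 4 / (K + 1))) as [N HN].
    { apply Rdiv_lt_0_compat; lra. }
    exists N. intros n Hn. specialize (HN n Hn). specialize (Hs n). lra. }
  destruct (complete _ (fun n => g (s n))) as [l Hl].
  { intros eps Heps. destruct (Hsmall eps Heps) as [N HN]. exists N. intros m n Hm Hn.
    change (hnorm (g (s m) -h g (s n)) < eps).
    eapply Rle_lt_trans; [apply g_near with (xi := xi); apply Hs |].
    pose proof (HN m Hm). pose proof (HN n Hn).
    assert (Hq := mul_div_succ_lt K (eps / 4) HK ltac:(lra)).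
    assert (K * (hnorm (xi -h s m) + hnorm (xi -h s n)) <= K * (2 * (eps / 4 / (K + 1))))
      by (apply Rmult_le_compat_l; lra).
    lra. }
  exists l. intros eps Heps.
  destruct (Hl (eps / 2)) as [N1 HN1]; [lra |].
  destruct (Hsmall eps Heps) as [N2 HN2].
  exists (eps / 4 / (K + 1)). split; [apply Rdiv_lt_0_compat; lra |]. intros a Ha Hxa.
  set (n := Nat.max N1 N2).
  specialize (HN1 n ltac:(lia)). specialize (HN2 n ltac:(lia)).
  change (hnorm (g (s n) -h l) < eps / 2) in HN1.
  pose proof (g_near xi a (s n) Ha (proj1 (Hs n))) as Hg.
  assert (Hq := mul_div_succ_lt K (eps / 4) HK ltac:(lra)).
  assert (K * (hnorm (xi -h a) + hnorm (xi -h s n)) <= K * (2 * (eps / 4 / (K + 1))))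
    by (apply Rmult_le_compat_l; lra).
  eapply Rle_lt_trans; [apply (hnorm_sub_triangle _ _ (g (s n))) |]. lra.
Qed.

Lemma lim_A0_at_A0 (a l : A) : A0 a -> lim_A0 a l -> l = g a.
Proof.
  intros Ha Hl. apply hsub_eq, hnorm_eq0, Rle_antisym; [| apply hnorm_ge0].
  apply eps_le. intros eps Heps. destruct (Hl eps Heps) as [delta [Hd Hdelta]].
  rewrite hnorm_sub_sym. apply Rlt_le. rewrite Rplus_0_l. apply Hdelta; [exact Ha |].
  rewrite hsub_self, hnorm0. exact Hd.
Qed.

Lemma lim_A0_lip (u w l1 l2 : A) :
  lim_A0 u l1 -> lim_A0 w l2 -> hnorm (l1 -h l2) <= K * hnorm (u -h w).
Proof.
  intros Hl1 Hl2. apply eps_le. intros eps Heps.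
  destruct (Hl1 (eps / 3)) as [d1 [Hd1 H1]]; [lra |].
  destruct (Hl2 (eps / 3)) as [d2 [Hd2 H2]]; [lra |].
  set (r := eps / 6 / (K + 1)).
  assert (Hr : 0 < r) by (apply Rdiv_lt_0_compat; lra).
  destruct (A0_dense _ u (Rmin d1 r)) as [a [Ha Hua]]; [apply Rmin_pos; assumption |].
  destruct (A0_dense _ w (Rmin d2 r)) as [b [Hb Hwb]]; [apply Rmin_pos; assumption |].
  change (hnorm (u -h a) < Rmin d1 r) in Hua. change (hnorm (w -h b) < Rmin d2 r) in Hwb.
  pose proof (Rmin_l d1 r). pose proof (Rmin_r d1 r).
  pose proof (Rmin_l d2 r). pose proof (Rmin_r d2 r).
  specialize (H1 a Ha ltac:(lra)). specialize (H2 b Hb ltac:(lra)).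
  assert (Hab : hnorm (a -h b) <= hnorm (u -h a) + hnorm (u -h w) + hnorm (w -h b)).
  { eapply Rle_trans; [apply (hnorm_sub_triangle _ _ u) |].
    rewrite (hnorm_sub_sym a u). pose proof (hnorm_sub_triangle u b w). lra. }
  pose proof (g_lip a b Ha Hb) as Hg.
  assert (Hq := mul_div_succ_lt K (eps / 6) HK ltac:(lra)). fold r in Hq.
  assert (K * hnorm (a -h b) <= K * hnorm (u -h w) + K * (2 * r)).
  { rewrite <- Rmult_plus_distr_l. apply Rmult_le_compat_l; lra. }
  pose proof (hnorm_sub_triangle l1 l2 (g a)) as T1.
  pose proof (hnorm_sub_triangle (g a) l2 (g b)) as T2.
  rewrite (hnorm_sub_sym l1 (g a)) in T1.
  assert (K * (2 * r) = 2 * (K * r)) by ring. lra.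
Qed.

Lemma Lip_extension : exists T : A -> A, Lip T /\ forall a, A0 a -> T a = g a.
Proof.
  destruct (choice _ lim_A0_exists) as [T HT]. exists T. split.
  - exists K. split; [exact HK |]. intros u w. apply lim_A0_lip; apply HT.
  - intros a Ha. apply lim_A0_at_A0; [exact Ha | apply HT].
Qed.

End LipschitzExtension.

Section UniformBoundedness.
Context {A : HQA}.
Implicit Types c w l : A.

Definition push c w (r : R) : A :=
  hadd c (hscal (mkC ((if Rle_dec 0 (Cre (inner c w)) then r else - r) / hnorm w) 0) w).

Lemma push_dist c w (r : R) : 0 <= r -> hnorm (push c w r -h c) <= r.
Proof.
  intro Hr. unfold push. rewrite hadd_subl, hnorm_scal.
  destruct (Req_dec (hnorm w) 0) as [H0 | H0]; [rewrite H0; lra |].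
  assert (Hw : 0 < hnorm w) by (pose proof (hnorm_ge0 w); lra).
  unfold Rdiv. rewrite Rabs_mult, Rabs_inv, (Rabs_right (hnorm w)) by lra.
  destruct (Rle_dec _ _); [| rewrite Rabs_Ropp]; rewrite Rabs_right by lra; field_simplify; lra.
Qed.

Lemma push_inner c w (r : R) : 0 <= r -> r * hnorm w <= Rabs (Cre (inner (push c w r) w)).
Proof.
  intro Hr. unfold push. rewrite inner_addl. simpl Cre. rewrite Re_inner_scall, <- hnorm_sq.
  destruct (Req_dec (hnorm w) 0) as [H0 | H0]; [rewrite H0, Rmult_0_r; apply Rabs_pos |].
  destruct (Rle_dec _ _) as [Hc | Hc].
  - replace (r / hnorm w * (hnorm w * hnorm w)) with (r * hnorm w) by (field; exact H0).
    rewrite Rabs_right; [lra |]. pose proof (hnorm_ge0 w). nra.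
  - replace (- r / hnorm w * (hnorm w * hnorm w)) with (- (r * hnorm w)) by (field; exact H0).
    rewrite Rabs_left; [lra |]. pose proof (hnorm_ge0 w). nra.
Qed.

Fixpoint push_seq (w : nat -> A) (n : nat) : A :=
  match n with
  | O => hzero
  | S k => push (push_seq w k) (w k) ((/ 4) ^ k)
  end.

Lemma geometric_tail (c : nat -> A) :
  (forall n, hnorm (c (S n) -h c n) <= (/ 4) ^ n) ->
  forall n k, hnorm (c (n + k)%nat -h c n) <= 4 / 3 * ((/ 4) ^ n - (/ 4) ^ (n + k)).
Proof.
  intros Hstep n k. induction k as [| k IH].
  - rewrite Nat.add_0_r, hsub_self, hnorm0. lra.
  - rewrite Nat.add_succ_r. eapply Rle_trans; [apply (hnorm_sub_triangle _ _ (c (n + k)%nat)) |].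
    specialize (Hstep (n + k)%nat). simpl pow. lra.
Qed.

Lemma geometric_limit (c : nat -> A) :
  (forall n, hnorm (c (S n) -h c n) <= (/ 4) ^ n) ->
  exists l, forall n, hnorm (l -h c n) <= 4 / 3 * (/ 4) ^ n.
Proof.
  intro Hstep. pose proof (geometric_tail c Hstep) as Htail.
  assert (Hq : forall n, 0 < (/ 4) ^ n) by (intro n; apply pow_lt; lra).
  destruct (complete _ c) as [l Hl].
  { intros eps Heps.
    destruct (pow_lt_1_zero (/ 4) ltac:(rewrite Rabs_right; lra) (3 / 8 * eps)) as [N HN];
      [lra |].
    exists N. intros m n Hm Hn. change (hnorm (c m -h c n) < eps).
    specialize (HN N (le_n N)). rewrite Rabs_right in HN by (apply Rle_ge, Rlt_le, Hq).
    pose proof (Htail N (m - N)%nat) as Tm. pose proof (Htail N (n - N)%nat) as Tn.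
    replace (N + (m - N))%nat with m in Tm by lia. replace (N + (n - N))%nat with n in Tn by lia.
    pose proof (Hq m). pose proof (Hq n).
    eapply Rle_lt_trans; [apply (hnorm_sub_triangle _ _ (c N)) |].
    rewrite (hnorm_sub_sym (c N)). lra. }
  exists l. intro n. apply eps_le. intros eps Heps. destruct (Hl eps Heps) as [N HN].
  specialize (HN (n + N)%nat ltac:(lia)). change (hnorm (c (n + N)%nat -h l) < eps) in HN.
  eapply Rle_trans; [apply (hnorm_sub_triangle _ _ (c (n + N)%nat)) |].
  rewrite (hnorm_sub_sym l). pose proof (Htail n N). pose proof (Hq (n + N)%nat). lra.
Qed.

(* Gliding hump: if the norms are unbounded, pick [w n] with [(/4)^n |w n| > 2 n]; the series
   of pushes converges to an [l] with [|Re <l, w n>| >= 2/3 (/4)^n |w n| > n] for every [n]. *)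
Lemma weakly_bounded_norm_bounded (I : Type) (v : I -> A) :
  (forall eta, exists Cb, forall i, Rabs (Cre (inner eta (v i))) <= Cb) ->
  exists M, forall i, hnorm (v i) <= M.
Proof.
  intro Hweak. apply NNPP. intro Hunb.
  assert (Hbig : forall M, exists i, M < hnorm (v i)).
  { intro M. apply NNPP. intro Hno. apply Hunb. exists M. intro i.
    apply Rnot_lt_le. intro Hlt. apply Hno. exists i. exact Hlt. }
  destruct (choice _ Hbig) as [pick Hpick].
  set (w := fun n : nat => v (pick (2 * INR n / (/ 4) ^ n))).
  set (c := push_seq w).
  destruct (geometric_limit c) as [l Hl].
  { intro n. apply push_dist, pow_le. lra. }
  destruct (Hweak l) as [Cb HCb]. destruct (INR_unbounded Cb) as [n Hn].
  set (q := (/ 4) ^ n). assert (Hq : 0 < q) by (apply pow_lt; lra).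
  assert (Hw : 2 * INR n < q * hnorm (w n)).
  { pose proof (Hpick (2 * INR n / q)) as P. fold q in P.
    apply (Rmult_lt_compat_l q) in P; [| exact Hq].
    replace (q * (2 * INR n / q)) with (2 * INR n) in P by (field; lra). exact P. }
  pose proof (push_inner (c n) (w n) q (Rlt_le _ _ Hq)) as Hpush.
  change (push (c n) (w n) q) with (c (S n)) in Hpush.
  pose proof (Hl (S n)) as Hlim. simpl pow in Hlim. fold q in Hlim.
  pose proof (Re_inner_sub_le (c (S n)) l (w n)) as Hsub. rewrite hnorm_sub_sym in Hsub.
  pose proof (Rabs_triang_inv (Cre (inner (c (S n)) (w n))) (Cre (inner l (w n)))).
  assert (Hl_bound : Rabs (Cre (inner l (w n))) <= Cb) by apply HCb.
  assert (hnorm (l -h c (S n)) * hnorm (w n) <= q * hnorm (w n) / 3).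
  { pose proof (hnorm_ge0 (w n)).
    apply (Rle_trans _ (4 / 3 * (/ 4 * q) * hnorm (w n))); [apply Rmult_le_compat_r; lra |].
    lra. }
  pose proof (pos_INR n). lra.
Qed.

Lemma bounded_on_A0_of_weak (S : A -> A) :
  S hzero = hzero ->
  (forall eta, exists Cb, forall y, A0 y -> Rabs (Cre (inner eta (S y))) <= Cb * hnorm y) ->
  bounded_on_A0 S.
Proof.
  intros HS0 Hweak.
  destruct (weakly_bounded_norm_bounded {y : A | A0 y /\ 0 < hnorm y}
              (fun i => hscal (mkC (/ hnorm (proj1_sig i)) 0) (S (proj1_sig i)))) as [M HM].
  { intro eta. destruct (Hweak eta) as [Cb HCb]. exists Cb. intros [y [Hy Hpos]]. simpl.
    rewrite Re_inner_scalr, Rabs_mult, Rabs_inv, (Rabs_right (hnorm y)) by lra.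
    apply (Rmult_le_reg_l (hnorm y)); [exact Hpos |].
    rewrite <- Rmult_assoc, Rinv_r by lra. specialize (HCb y Hy). lra. }
  exists (Rmax M 0). split; [apply Rmax_r |]. intros y Hy.
  destruct (Req_dec (hnorm y) 0) as [H0 | H0].
  { rewrite (hnorm_eq0 y H0), HS0, hnorm0. lra. }
  assert (Hpos : 0 < hnorm y) by (pose proof (hnorm_ge0 y); lra).
  specialize (HM (exist _ y (conj Hy Hpos))). simpl in HM.
  rewrite hnorm_scal, Rabs_inv, Rabs_right in HM by lra.
  apply (Rmult_le_compat_l (hnorm y)) in HM; [| lra].
  rewrite <- Rmult_assoc, Rinv_r in HM by lra. pose proof (Rmax_l M 0). nra.
Qed.

End UniformBoundedness.

Section WeakMultiplication.
Context {A : HQA}.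

Lemma left_mult_of_bounded_r (xi eta : A) : bounded_elt A xi -> left_mult A eta xi.
Proof.
  intro Hb. destruct (bounded_mulr xi Hb) as [K [HK HKb]].
  destruct (Lip_extension (fun a => mul a xi) K HK) as [T [LT HT]].
  { intros a b Ha Hb'. rewrite <- mul_Hr_subl by assumption. apply HKb, A0_sub; assumption. }
  exists (T eta). intros x y Hx Hy. revert eta.
  apply (CLip_dense_ext (fun u => inner (mul xi x) (mul (star u) y))
                        (fun u => inner (mul (T u) x) y)).
  - apply CLip_inner_r, (Lip_comp (fun u => mul u y)); [apply Lip_mulr, Hy | apply Lip_star].
  - apply CLip_inner_l, (Lip_comp (fun u => mul u x)); [apply Lip_mulr, Hx | exact LT].
  - intros a Ha. rewrite HT, mul_Hm_assoc, (ha_adj_Hm a) by assumption. reflexivity.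
Qed.

Lemma left_mult_of_bounded_l (xi eta : A) : bounded_elt A xi -> left_mult A xi eta.
Proof.
  intro Hb. destruct (proj1 (bounded_eltP xi) Hb) as [K [HK HKb]].
  destruct (Lip_extension (fun a => mul xi a) K HK) as [T [LT HT]].
  { intros a b Ha Hb'. rewrite <- mul_Hl_subr by assumption. apply HKb, A0_sub; assumption. }
  exists (T eta). intros x y Hx Hy. revert eta.
  apply (CLip_dense_ext (fun u => inner (mul u x) (mul (star xi) y))
                        (fun u => inner (mul (T u) x) y)).
  - apply CLip_inner_l, Lip_mulr, Hx.
  - apply CLip_inner_l, (Lip_comp (fun u => mul u x)); [apply Lip_mulr, Hx | exact LT].
  - intros a Ha. rewrite HT, mul_Hl_assoc, (ha_adj_Hl xi) by auto using A0_mul. reflexivity.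
Qed.

Lemma bounded_of_left_mult_r (e xi : A) :
  is_unit A e -> (forall eta, left_mult A eta xi) -> bounded_elt A xi.
Proof.
  intros [He Hu] Hm. apply bounded_of_mulr_star, bounded_on_A0_of_weak; [apply mul_Hr_zero |].
  intro eta. destruct (Hm eta) as [z Hz]. exists (hnorm z). intros y Hy.
  specialize (Hz e y He Hy).
  rewrite (proj1 (Hu xi)), (proj1 (Hu z)), inner_star_mul_swap in Hz by exact Hy.
  rewrite Hz. apply cauchy_schwarz_Re.
Qed.

Lemma bounded_of_left_mult_l (e xi : A) :
  is_unit A e -> (forall eta, left_mult A xi eta) -> bounded_elt A xi.
Proof.
  intros [He Hu] Hm. rewrite <- (star_star _ xi).
  apply bounded_star, bounded_eltP, bounded_on_A0_of_weak; [apply mul_Hl_zero |].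
  intro eta. destruct (Hm eta) as [z Hz]. exists (hnorm z). intros y Hy.
  specialize (Hz e y He Hy). rewrite (proj1 (Hu eta)), (proj1 (Hu z)) in Hz.
  rewrite Hz. apply cauchy_schwarz_Re.
Qed.

End WeakMultiplication.

Theorem mainTheorem10 (A : HQA) (e : A) (he : is_unit A e) :
  (forall xi : A, bounded_elt A xi <-> (forall eta : A, left_mult A eta xi)) /\
  (forall xi : A, bounded_elt A xi <-> (forall eta : A, left_mult A xi eta)).
Proof.
  split; intro xi; split.
  - intros Hb eta. apply left_mult_of_bounded_r, Hb.
  - apply (bounded_of_left_mult_r e), he.
  - intros Hb eta. apply left_mult_of_bounded_l, Hb.
  - apply (bounded_of_left_mult_l e), he.
Qed.
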